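(* For any fuzzifying topological space $(X,\tau)$ and $A\subseteq X$, $$\max\big(0,\ L_PC(X,\tau)+F_P(A)-1\big)\le L_PC(A,\tau/A),$$ i.e. $\vDash (X,\tau)\in L_PC\otimes A\in F_P\to(A,\tau/A)\in L_PC$.
   Context: Łukasiewicz semantics: $[\varphi\otimes\psi]=\max(0,[\varphi]+[\psi]-1)$, $[\varphi\to\psi]=\min(1,1-[\varphi]+[\psi])$, $[\forall]=\inf$, $[\exists]=\sup$, $\vDash$ means value $1$. A fuzzifying topology on $X$ is $\tau:P(X)\to[0,1]$ with $\tau(X)=1$, $\tau(A\cap B)\ge\min(\tau(A),\tau(B))$, $\tau(\bigcup A_\lambda)\ge\inf\tau(A_\lambda)$. $N_x(A)=\sup_{x\in B\subseteq A}\tau(B)$; $Cl(A)(x)=1-N_x(X\setminus A)$; for $\mu:X\to[0,1]$, $Int(\mu)(x)=\sup_{x\in B}\min(\tau(B),\inf_{y\in B}\mu(y))$. Pre-open degrees $\tau_P(A)=\inf_{x\in A}Int(Cl(A))(x)$; $F_P(A)=\tau_P(X\setminus A)$; $N^P_x(A)=\sup_{x\in B\subseteq A}\tau_P(B)$. For $G\subseteq X$: $(\tau_P/G)(B)=\sup\{\tau_P(V):V\cap G=B\}$, $B\subseteq G$. Compactness degree of a set $G$ w.r.t. $\rho:P(G)\to[0,1]$: with $K(\Re,G)=\inf_{x\in G}\sup_{B\ni x}\Re(B)$, $[\Re\subseteq\rho]=\inf_B\min(1,1-\Re(B)+\rho(B))$, $\wp\le\Re$ pointwise, $FF(\wp)=1-\inf\{\delta\in[0,1]:\{B:\wp(B)>\delta\}\text{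 finite}\}$, $\Gamma(G,\rho)=\inf_{\Re}\min\big(1,1-\max(0,K(\Re,G)+[\Re\subseteq\rho]-1)+\sup_{\wp\le\Re}\max(0,K(\wp,G)+FF(\wp)-1)\big)$. $\Gamma_P(G)=\Gamma(G,\tau_P/G)$. Locally strong compactness: $L_PC(X,\tau)=\inf_{x\in X}\sup_{B\subseteq X}\max(0,N^P_x(B)+\Gamma_P(B)-1)$; for the subspace, with $N^{P^A}_x(G)=\sup_{x\in C\subseteq G}(\tau_P/A)(C)$, $L_PC(A,\tau/A)=\inf_{x\in A}\sup_{G\subseteq A}\max(0,N^{P^A}_x(G)+\Gamma(G,\tau_P/G)-1)$. *)

From HB Require Import structures.
From mathcomp Require Import all_boot all_order all_algebra.
From mathcomp Require Import boolp classical_sets cardinality reals.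
Set Implicit Arguments. Unset Strict Implicit. Unset Printing Implicit Defensive.
Import Order.TTheory GRing.Theory Num.Theory.
Local Open Scope classical_set_scope.
Local Open Scope ring_scope.

Section FuzzyDefs.
Variables (R : realType) (X : Type).

(* Sup / inf in the complete lattice [0,1]: sup of empty = 0, inf of empty = 1. *)
Definition sup01 (S : set R) : R := sup (S `|` [set 0]).
Definition inf01 (S : set R) : R := inf (S `|` [set 1]).

Definition luk_and (a b : R) : R := Num.max 0 (a + b - 1).
Definition luk_imp (a b : R) : R := Num.min 1 (1 - a + b).

Definition is_fuzzifying_topology (tau : set X -> R) : Prop :=
  (forall A, 0 <= tau A <= 1) /\
  tau setT = 1 /\
  (forall A B, Num.min (tau A) (tau B) <= tau (A `&` B)) /\
  (forall F : set (set X), inf01 [set tau B | B in F] <= tau (\bigcup_(B in F) B)).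

Variable tau : set X -> R.

Definition fnbhd (x : X) (A : set X) : R :=
  sup01 [set r | exists B : set X, B x /\ B `<=` A /\ r = tau B].

Definition fcl (A : set X) (x : X) : R := 1 - fnbhd x (~` A).

Definition fint (mu : X -> R) (x : X) : R :=
  sup01 [set r | exists B : set X, B x /\ r = Num.min (tau B) (inf01 [set mu y | y in B])].

Definition preopen (A : set X) : R := inf01 [set fint (fcl A) x | x in A].
Definition preclosed (A : set X) : R := preopen (~` A).
Definition Pnbhd (x : X) (A : set X) : R :=
  sup01 [set r | exists B : set X, B x /\ B `<=` A /\ r = preopen B].

Definition relative (rho : set X -> R) (G B : set X) : R :=
  sup01 [set r | exists V : set X, V `&` G = B /\ r = rho V].

(* fuzzy families of subsets of G: P(G) -> [0,1] (values outside P(G) irrelevant) *)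
Definition fuzzy_family (G : set X) (Rf : set X -> R) : Prop :=
  forall B, B `<=` G -> 0 <= Rf B <= 1.
Definition subfam (G : set X) (p Rf : set X -> R) : Prop :=
  forall B, B `<=` G -> p B <= Rf B.

Definition Kdeg (Rf : set X -> R) (G : set X) : R :=
  inf01 [set sup01 [set Rf B | B in [set B | B x /\ B `<=` G]] | x in G].

Definition incl (Rf rho : set X -> R) (G : set X) : R :=
  inf01 [set Num.min 1 (1 - Rf B + rho B) | B in [set B | B `<=` G]].

Definition FF (p : set X -> R) (G : set X) : R :=
  1 - inf01 [set d | 0 <= d <= 1 /\ finite_set [set B | B `<=` G /\ d < p B]].

Definition Gamma (G : set X) (rho : set X -> R) : R :=
  inf01 [set luk_imp (luk_and (Kdeg Rf G) (incl Rf rho G))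
                     (sup01 [set luk_and (Kdeg p G) (FF p G)
                            | p in [set p | fuzzy_family G p /\ subfam G p Rf]])
        | Rf in fuzzy_family G].

Definition GammaP (G : set X) : R := Gamma G (relative preopen G).

Definition LPC : R :=
  inf01 [set sup01 [set luk_and (Pnbhd x B) (GammaP B) | B in [set: set X]]
        | x in [set: X]].

Definition PnbhdA (A : set X) (x : X) (G : set X) : R :=
  sup01 [set r | exists C : set X, C x /\ C `<=` G /\ r = relative preopen A C].

Definition LPC_sub (A : set X) : R :=
  inf01 [set sup01 [set luk_and (PnbhdA A x G) (Gamma G (relative preopen G))
                   | G in [set G | G `<=` A]]
        | x in A].

End FuzzyDefs.

From HB Require Import structures.
From mathcomp Require Import all_boot all_order all_algebra.
From mathcomp Require Import boolp classical_sets cardinality reals.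
From mathcomp Require Import lra.
Set Implicit Arguments. Unset Strict Implicit. Unset Printing Implicit Defensive.
Import Order.TTheory GRing.Theory Num.Theory.
Local Open Scope classical_set_scope.
Local Open Scope ring_scope.

(* Fix x in A and a set B, a pre-neighbourhood of x.  Then A `&` B is a
   pre-neighbourhood of x in the subspace A, at least to the degree of B.  It
   is also strongly compact in the subspace to degree Gamma_P(B) & F_P(A): this
   is the fuzzy form of "a closed subset of a compact set is compact".  A
   pre-open cover of A `&` B extends to a cover of B once B minus A is added,
   and that set is pre-open in B to degree F_P(A).  A finite subfamily of the
   extension then restricts to a finite subfamily of the original cover.  Both
   estimates together give the inequality pointwise in x. *)

Section UnitInterval.
Variable R : realType.
Implicit Types (S : set R) (a b c f s t : R).

Lemma sup01_ge0 S : 0 <= sup01 S.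
Proof.
rewrite /sup01; have [hS|hS] := pselect (has_sup (S `|` [set 0])).
  by apply: (sup_upper_bound hS); right.
by rewrite sup_out.
Qed.

Lemma sup01_ub S M s : (forall t, S t -> t <= M) -> S s -> s <= sup01 S.
Proof.
move=> SM Ss; apply: ub_le_sup; last by left.
by exists (Num.max M 0) => t [/SM tM|->]; rewrite le_max ?tM ?lexx ?orbT.
Qed.

Lemma sup01_le S M : 0 <= M -> (forall t, S t -> t <= M) -> sup01 S <= M.
Proof.
move=> M0 SM; apply: ge_sup; first by exists 0; right.
by move=> t [/SM|->].
Qed.

Lemma sup01_gt S a : 0 <= a -> a < sup01 S -> exists2 t, S t & a < t.
Proof.
move=> a0 /sup_gt [|t [St|->] at_]; first by exists 0; right.
  by exists t.
by move: (lt_le_trans at_ a0); rewrite ltxx.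
Qed.

Lemma inf01_le1 S : inf01 S <= 1.
Proof.
rewrite /inf01; have [hS|hS] := pselect (has_lbound (S `|` [set 1])).
  by apply: (ge_inf hS); right.
by rewrite inf_out // => -[_]; exact: hS.
Qed.

Lemma inf01_lb S m s : (forall t, S t -> m <= t) -> S s -> inf01 S <= s.
Proof.
move=> Sm Ss; apply: ge_inf; last by left.
by exists (Num.min m 1) => t [/Sm mt|->]; rewrite ge_min ?mt ?lexx ?orbT.
Qed.

Lemma inf01_ge S m : m <= 1 -> (forall t, S t -> m <= t) -> m <= inf01 S.
Proof.
move=> m1 Sm; apply: lb_le_inf; first by exists 1; right.
by move=> t [/Sm|->].
Qed.

Lemma luk_and_ge0 a b : 0 <= luk_and a b.
Proof. by rewrite /luk_and le_max lexx. Qed.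

Lemma luk_and_ge a b : a + b - 1 <= luk_and a b.
Proof. by rewrite /luk_and le_max lexx orbT. Qed.

Lemma luk_and_le a b c : 0 <= c -> a + b - 1 <= c -> luk_and a b <= c.
Proof. by move=> c0 abc; rewrite /luk_and ge_max c0 abc. Qed.

Lemma luk_and_le1 a b : a <= 1 -> b <= 1 -> luk_and a b <= 1.
Proof. by move=> a1 b1; apply: luk_and_le => //; lra. Qed.

Lemma luk_imp_le a b : luk_imp a b <= 1 - a + b.
Proof. by rewrite /luk_imp ge_min lexx orbT. Qed.

Lemma luk_imp_ge a b c : c <= 1 -> c <= 1 - a + b -> c <= luk_imp a b.
Proof. by move=> c1 cab; rewrite /luk_imp le_min c1 cab. Qed.

Lemma luk_imp_ge0 a b : a <= 1 -> 0 <= b -> 0 <= luk_imp a b.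
Proof. by move=> a1 b0; apply: luk_imp_ge => //; lra. Qed.

Lemma luk_and_le2 a a' b b' :
  a <= a' -> b <= b' -> luk_and a b <= luk_and a' b'.
Proof.
move=> aa' bb'; apply: luk_and_le; first exact: luk_and_ge0.
by have := luk_and_ge a' b'; lra.
Qed.

Lemma luk_andA a b c :
  a <= 1 -> c <= 1 -> luk_and (luk_and a b) c = luk_and a (luk_and b c).
Proof.
move=> a1 c1; rewrite /luk_and.
case: (leP 0 (a + b - 1)) => ?; case: (leP 0 (b + c - 1)) => ?.
all: by do ![case: leP => ?]; lra.
Qed.

Lemma luk_and_sup01_le S f c : 0 <= c -> f <= 1 ->
  (forall t, S t -> luk_and t f <= c) -> luk_and (sup01 S) f <= c.
Proof.
move=> c0 f1 Sc; apply: luk_and_le => //.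
suff : sup01 S <= c + 1 - f by lra.
apply: sup01_le => [|t /Sc]; first lra.
by have := luk_and_ge t f; lra.
Qed.

Lemma luk_and_imp_le a f g k s s' :
  a <= 1 -> f <= 1 -> 0 <= s' -> g <= luk_imp k s -> luk_and a f <= k ->
  s <= s' -> luk_and g f <= luk_imp a s'.
Proof.
move=> a1 f1 s'0 gks afk ss'.
have g1 : g <= 1 by apply: le_trans gks _; rewrite /luk_imp ge_min lexx.
have ks := luk_imp_le k s; have af := luk_and_ge a f.
by apply: luk_imp_ge; apply: luk_and_le; lra.
Qed.

End UnitInterval.

Section Degrees.
Variables (R : realType) (X : Type).
Implicit Types (tau : set X -> R) (G B V : set X) (Rf p rho : set X -> R).

Definition cover_at Rf G (x : X) : R :=
  sup01 [set Rf B | B in [set B | B x /\ B `<=` G]].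

Definition fin_subcover Rf G : R :=
  sup01 [set luk_and (Kdeg p G) (FF p G)
        | p in [set p | fuzzy_family G p /\ subfam G p Rf]].

Lemma Kdeg_le_cover_at Rf G x : G x -> Kdeg Rf G <= cover_at Rf G x.
Proof.
move=> Gx; apply: (@inf01_lb _ _ 0); last by exists x.
by move=> _ [y _ <-]; exact: sup01_ge0.
Qed.

Lemma cover_at_ub Rf G B x :
  fuzzy_family G Rf -> B x -> B `<=` G -> Rf B <= cover_at Rf G x.
Proof.
move=> RfG Bx BG; apply: (@sup01_ub _ _ 1); last by exists B.
by move=> _ [D [_ DG] <-]; case/andP: (RfG _ DG).
Qed.

Lemma relative_le1 tau G B : relative (preopen tau) G B <= 1.
Proof. by apply: sup01_le => // _ [V [_ ->]]; exact: inf01_le1. Qed.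

Lemma relative_ub tau G V : preopen tau V <= relative (preopen tau) G (V `&` G).
Proof.
apply: (@sup01_ub _ _ 1); last by exists V.
by move=> _ [W [_ ->]]; exact: inf01_le1.
Qed.

Lemma Pnbhd_le1 tau x B : Pnbhd tau x B <= 1.
Proof. by apply: sup01_le => // _ [C [_ [_ ->]]]; exact: inf01_le1. Qed.

Lemma PnbhdA_le1 tau A x G : PnbhdA tau A x G <= 1.
Proof. by apply: sup01_le => // _ [C [_ [_ ->]]]; exact: relative_le1. Qed.

Lemma FF_le1 p G : FF p G <= 1.
Proof.
rewrite /FF; set d := inf01 _; suff : 0 <= d by lra.
by apply: inf01_ge => // e [/andP[]].
Qed.

Lemma fin_subcover_ub Rf p G :
  fuzzy_family G p -> subfam G p Rf ->
  luk_and (Kdeg p G) (FF p G) <= fin_subcover Rf G.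
Proof.
move=> pG pRf; apply: (@sup01_ub _ _ 1); last by exists p.
by move=> _ [q _ <-]; apply: luk_and_le1; [exact: inf01_le1|exact: FF_le1].
Qed.

Lemma Gamma_transfer G B rho rho' f :
  f <= 1 ->
  (forall Rf, fuzzy_family G Rf -> exists2 Rf', fuzzy_family B Rf' &
     [/\ luk_and (Kdeg Rf G) (incl Rf rho G) <= Kdeg Rf' B,
         f <= incl Rf' rho' B & fin_subcover Rf' B <= fin_subcover Rf G]) ->
  luk_and (Gamma B rho') f <= Gamma G rho.
Proof.
move=> f1 extend; apply: inf01_ge; first exact: luk_and_le1 (inf01_le1 _) f1.
move=> _ [Rf /extend[Rf' Rf'B [KI_K' f_I' fin_fin]] <-].
apply: (luk_and_imp_le _ f1 (sup01_ge0 _) _ (luk_and_le2 KI_K' f_I') fin_fin).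
  by apply: luk_and_le1; exact: inf01_le1.
apply: (@inf01_lb _ _ 0); last by exists Rf'.
move=> _ [Q _ <-]; apply: luk_imp_ge0; last exact: sup01_ge0.
by apply: luk_and_le1; exact: inf01_le1.
Qed.

End Degrees.

Section Extension.
Variables (R : realType) (X : Type) (tau : set X -> R) (A B : set X).
Local Notation pre := (preopen tau).
Local Notation rel := (relative (preopen tau)).

(* Extension of a cover [Rf] of [A `&` B] to a cover of [B]; the extra member
   [~` A `&` B] is pre-open in [B] to degree [F_P(A)]. *)
Definition ext_family (Rf : set X -> R) (E : set X) : R :=
  if pselect (E = ~` A `&` B) then 1
  else sup01 [set Num.min (Rf (V `&` (A `&` B))) (pre V)
             | V in [set V | V `&` B = E]].

(* [~` A `&` B] is left out: it is the one member of the extension that does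
   not come from [Rf]. *)
Definition restr_family (p : set X -> R) (D : set X) : R :=
  sup01 [set p E | E in [set E | E `<=` B /\ E <> ~` A `&` B /\ E `&` A = D]].

Variable Rf : set X -> R.
Hypothesis RfAB : fuzzy_family (A `&` B) Rf.
Local Notation Rf' := (ext_family Rf).

Lemma ext_family_compl : Rf' (~` A `&` B) = 1.
Proof. by rewrite /ext_family; case: pselect. Qed.

Lemma ext_familyE E : E <> ~` A `&` B ->
  Rf' E = sup01 [set Num.min (Rf (V `&` (A `&` B))) (pre V)
                | V in [set V | V `&` B = E]].
Proof. by rewrite /ext_family; case: pselect. Qed.

Lemma ext_family_fuzzy E : 0 <= Rf' E <= 1.
Proof.
have [->|nE] := pselect (E = ~` A `&` B); first by rewrite ext_family_compl ler01 lexx.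
rewrite ext_familyE // sup01_ge0; apply: sup01_le => // _ [V _ <-].
by rewrite ge_min inf01_le1 orbT.
Qed.

Lemma ext_family_ge V : V `&` B <> ~` A `&` B ->
  Num.min (Rf (V `&` (A `&` B))) (pre V) <= Rf' (V `&` B).
Proof.
move=> VBnAB; rewrite ext_familyE //; apply: (@sup01_ub _ _ 1); last by exists V.
by move=> _ [W _ <-]; rewrite ge_min inf01_le1 orbT.
Qed.

Lemma cover_at_ext_family x D : D x -> D `<=` A `&` B ->
  Rf D + incl Rf (rel (A `&` B)) (A `&` B) - 1 <= cover_at Rf' B x.
Proof.
move=> Dx DAB; set M := cover_at Rf' B x.
have [Ax Bx] := DAB _ Dx.
have M_ub E : E x -> E `<=` B -> Rf' E <= M.
  by move=> Ex EB; apply: cover_at_ub => // F _; exact: ext_family_fuzzy.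
have I1 : incl Rf (rel (A `&` B)) (A `&` B) <= 1 := inf01_le1 _.
have [RfDM|MRfD] := leP (Rf D) M; first lra.
have relDM : rel (A `&` B) D <= M.
  apply: sup01_le; first exact: sup01_ge0.
  move=> _ [V [VD ->]].
  have VBx : (V `&` B) x by move: Dx; rewrite -VD => -[? []].
  have VBnAB : V `&` B <> ~` A `&` B by move=> e; move: VBx; rewrite e => -[].
  have := le_trans (ext_family_ge VBnAB) (M_ub _ VBx (@subIsetr _ _ _)).
  by rewrite VD ge_min => /orP[|//]; lra.
have : incl Rf (rel (A `&` B)) (A `&` B) <= Num.min 1 (1 - Rf D + rel (A `&` B) D).
  apply: (@inf01_lb _ _ 0); last by exists D.
  move=> _ [E /RfAB/andP[_ RfE1] <-]; rewrite le_min ler01 /=.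
  by have : 0 <= rel (A `&` B) E := sup01_ge0 _; lra.
by rewrite le_min => /andP[_]; lra.
Qed.

Lemma Kdeg_ext_family :
  luk_and (Kdeg Rf (A `&` B)) (incl Rf (rel (A `&` B)) (A `&` B)) <= Kdeg Rf' B.
Proof.
apply: inf01_ge; first exact: luk_and_le1 (inf01_le1 _) (inf01_le1 _).
move=> _ [x Bx <-]; rewrite -/(cover_at Rf' B x).
have [Ax|nAx] := pselect (A x); last first.
  have : 1 <= cover_at Rf' B x.
    rewrite -ext_family_compl; apply: cover_at_ub (conj nAx Bx) _ => // E _.
    exact: ext_family_fuzzy.
  exact/le_trans/luk_and_le1/inf01_le1/inf01_le1.
apply: luk_and_le; first exact: sup01_ge0.
have := @Kdeg_le_cover_at _ _ Rf (A `&` B) x (conj Ax Bx).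
suff : cover_at Rf (A `&` B) x <=
       cover_at Rf' B x + 1 - incl Rf (rel (A `&` B)) (A `&` B) by lra.
apply: sup01_le => [|_ [D [Dx DAB] <-]]; last first.
  by have := cover_at_ext_family Dx DAB; lra.
have M0 : 0 <= cover_at Rf' B x := sup01_ge0 _.
by have I1 : incl Rf (rel (A `&` B)) (A `&` B) <= 1 := inf01_le1 _; lra.
Qed.

Lemma incl_ext_family : preclosed tau A <= incl Rf' (rel B) B.
Proof.
apply: inf01_ge; first exact: inf01_le1.
move=> _ [E EB <-]; rewrite le_min inf01_le1 /=.
have [->|nE] := pselect (E = ~` A `&` B).
  by rewrite ext_family_compl subrr add0r; exact: relative_ub.
suff : Rf' E <= rel B E by have F1 : preclosed tau A <= 1 := inf01_le1 _; lra.
rewrite ext_familyE //; apply: sup01_le => [|_ [V VBE <-]]; first exact: sup01_ge0.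
by rewrite ge_min -VBE relative_ub orbT.
Qed.

Section Restriction.
Variable p : set X -> R.
Hypotheses (pB : fuzzy_family B p) (p_Rf' : subfam B p Rf').
Local Notation p' := (restr_family p).

Lemma restr_family_le1 D : p' D <= 1.
Proof. by apply: sup01_le => // _ [E [/pB/andP[_ pE1] _] <-]. Qed.

Lemma restr_family_fuzzy : fuzzy_family (A `&` B) p'.
Proof. by move=> D _; rewrite sup01_ge0 restr_family_le1. Qed.

Lemma restr_family_ub E : E `<=` B -> E <> ~` A `&` B -> p E <= p' (E `&` A).
Proof.
move=> EB nE; apply: (@sup01_ub _ _ 1); last by exists E.
by move=> _ [F [/pB/andP[_ pF1] _] <-].
Qed.

Lemma restr_family_subfam : subfam (A `&` B) p' Rf.
Proof.
move=> D DAB; have [RfD0 _] := andP (RfAB DAB).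
apply: sup01_le => // _ [E [EB [nE EAD]] <-].
apply: le_trans (p_Rf' EB) _; rewrite ext_familyE //.
apply: sup01_le => // _ [V VBE <-]; rewrite ge_min.
suff -> : V `&` (A `&` B) = D by rewrite lexx.
by rewrite -EAD -VBE; apply/seteqP; split=> z /=; tauto.
Qed.

Lemma Kdeg_restr_family : Kdeg p B <= Kdeg p' (A `&` B).
Proof.
apply: inf01_ge => [|_ [x [Ax Bx] <-]]; first exact: inf01_le1.
apply: le_trans (@Kdeg_le_cover_at _ _ p B x Bx) _.
apply: sup01_le => [|_ [E [Ex EB] <-]]; first exact: sup01_ge0.
have nE : E <> ~` A `&` B by move=> e; move: Ex; rewrite e => -[].
apply: le_trans (restr_family_ub EB nE) _.
apply: cover_at_ub => [||z [/EB]] //; exact: restr_family_fuzzy.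
Qed.

Lemma FF_restr_family : FF p B <= FF p' (A `&` B).
Proof.
rewrite /FF lerD2l lerN2.
apply: inf01_ge => [|d [/andP[d0 d1] fin]]; first exact: inf01_le1.
apply: (@inf01_lb _ _ 0) => [_ [/andP[] //]|]; split; first by rewrite d0.
apply: sub_finite_set (finite_image (fun E => E `&` A) fin) => D [DAB dD].
have [_ [E [EB [_ EAD]] <-] dE] := sup01_gt d0 dD.
by exists E.
Qed.

End Restriction.

Lemma fin_subcover_ext_family : fin_subcover Rf' B <= fin_subcover Rf (A `&` B).
Proof.
apply: sup01_le => [|_ [p [pB p_Rf'] <-]]; first exact: sup01_ge0.
apply: le_trans _ (fin_subcover_ub (restr_family_fuzzy pB) (restr_family_subfam p_Rf')).
by apply: luk_and_le2; [exact: Kdeg_restr_family|exact: FF_restr_family].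
Qed.

End Extension.

Lemma GammaP_setI (R : realType) (X : Type) (tau : set X -> R) (A B : set X) :
  luk_and (GammaP tau B) (preclosed tau A) <=
  Gamma (A `&` B) (relative (preopen tau) (A `&` B)).
Proof.
apply: Gamma_transfer => [|Rf RfAB]; first exact: inf01_le1.
exists (ext_family tau A B Rf) => [E _|]; first exact: ext_family_fuzzy.
split; [exact: Kdeg_ext_family|exact: incl_ext_family|].
exact: fin_subcover_ext_family.
Qed.

Lemma Pnbhd_le_PnbhdA (R : realType) (X : Type) (tau : set X -> R) (A B : set X) x :
  A x -> Pnbhd tau x B <= PnbhdA tau A x (A `&` B).
Proof.
move=> Ax; apply: sup01_le => [|_ [C [Cx [CB ->]]]]; first exact: sup01_ge0.
apply: le_trans (relative_ub tau A C) _.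
apply: (@sup01_ub _ _ 1) => [_ [D [_ [_ ->]]]|]; first exact: relative_le1.
by exists (C `&` A); split=> //; split=> // z [/CB].
Qed.

Theorem theorem4p1 (R : realType) (X : Type) (tau : set X -> R)
  (htau : is_fuzzifying_topology tau) (A : set X) :
  luk_and (LPC tau) (preclosed tau A) <= LPC_sub tau A.
Proof.
have F1 : preclosed tau A <= 1 := inf01_le1 _.
apply: inf01_ge => [|_ [x Ax <-]]; first exact: luk_and_le1 (inf01_le1 _) F1.
have LPC_le : LPC tau <=
    sup01 [set luk_and (Pnbhd tau x B) (GammaP tau B) | B in [set: set X]].
  by apply: (@inf01_lb _ _ 0) => [_ [y _ <-]|]; [exact: sup01_ge0|exists x].
apply: le_trans (luk_and_le2 LPC_le (lexx _)) _.
apply: (luk_and_sup01_le _ F1) => [|_ [B _ <-]]; first exact: sup01_ge0.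
rewrite luk_andA ?Pnbhd_le1 //.
apply: le_trans (luk_and_le2 (Pnbhd_le_PnbhdA _ _ Ax) (GammaP_setI _ _ _)) _.
apply: (@sup01_ub _ _ 1) => [_ [G _ <-]|]; last by exists (A `&` B) => //; exact: subIsetl.
exact: luk_and_le1 (PnbhdA_le1 _ _ _ _) (inf01_le1 _).
Qed.
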